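(* For all $k,n\in\mathbb{N}$ and every $a\in\mathcal{L}_n^k$, the function $f^a:\mathcal{L}_n^k\to\mathcal{L}_n^k$ is monotone, i.e. $u\le v$ implies $f^a(u)\le f^a(v)$.
   Context: $\mathcal{L}_n^k=\{0,1,\ldots,n-1\}^k$ with the componentwise order $u\le v$ iff $u_i\le v_i$ for all $i\in[k]$. For $a\in\mathcal{L}_n^k$, define $f^a$ coordinatewise: for $v\in\mathcal{L}_n^k$ and $i\in[k]$, $f^a_i(v)=v_i-1$ if $v_i>a_i$ and $v_j\le a_j$ for all $j<i$; $f^a_i(v)=v_i+1$ if $v_i<a_i$ and $v_j\ge a_j$ for all $j<i$; and $f^a_i(v)=v_i$ otherwise. Then $f^a(v)=(f^a_1(v),\ldots,f^a_k(v))$. *)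

From mathcomp Require Import all_boot.
Set Implicit Arguments. Unset Strict Implicit. Unset Printing Implicit Defensive.

(* Points of L_n^k are represented as functions 'I_k -> nat (coordinates
   indexed 0..k-1, standing for 1..k) with all coordinates < n. *)
Definition inL (n k : nat) (v : 'I_k -> nat) : Prop := forall i, v i < n.

Definition leL (k : nat) (u v : 'I_k -> nat) : Prop := forall i, u i <= v i.

Definition fa (k : nat) (a v : 'I_k -> nat) : 'I_k -> nat := fun i =>
  if (a i < v i) && [forall j : 'I_k, (j < i) ==> (v j <= a j)] then (v i).-1
  else if (v i < a i) && [forall j : 'I_k, (j < i) ==> (a j <= v j)] then (v i).+1
  else v i.

(* Coordinate i of f^a moves v_i one step towards a_i, downwards only if
   v <= a on all earlier coordinates and upwards only if v >= a there.  For
   fixed permissions this one-step move is monotone in v_i; and if u <= v,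
   then u has every downward permission and v every upward permission that
   the other one has, and extra permissions can only lower u's image and
   raise v's. *)

From mathcomp Require Import all_boot.
From mathcomp Require Import zify.

Set Implicit Arguments.
Unset Strict Implicit.
Unset Printing Implicit Defensive.

Definition step_toward (down up : bool) (a x : nat) : nat :=
  if (a < x) && down then x.-1 else if (x < a) && up then x.+1 else x.

Lemma step_toward_monotone (down up : bool) (a x y : nat) :
  x <= y -> step_toward down up a x <= step_toward down up a y.
Proof.
by rewrite /step_toward; case: down; case: up; rewrite ?andbT ?andbF;
  repeat case: ifP; lia.
Qed.

Lemma step_toward_permissions (down1 up1 down2 up2 : bool) (a x : nat) :
  (down2 ==> down1) -> (up1 ==> up2) ->
  step_toward down1 up1 a x <= step_toward down2 up2 a x.
Proof.
rewrite /step_toward.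
by case: down1; case: down2; case: up1; case: up2 => //= _ _;
  rewrite ?andbT ?andbF; repeat case: ifP; lia.
Qed.

Definition prefix_le (k : nat) (w1 w2 : 'I_k -> nat) (i : 'I_k) : bool :=
  [forall j : 'I_k, (j < i) ==> (w1 j <= w2 j)].

Lemma fa_step_toward (k : nat) (a v : 'I_k -> nat) (i : 'I_k) :
  fa a v i = step_toward (prefix_le v a i) (prefix_le a v i) (a i) (v i).
Proof. by []. Qed.

Lemma prefix_le_trans (k : nat) (w1 w2 w3 : 'I_k -> nat) (i : 'I_k) :
  prefix_le w1 w2 i -> prefix_le w2 w3 i -> prefix_le w1 w3 i.
Proof.
move=> /forallP le12 /forallP le23; apply/forallP=> j; apply/implyP=> ji.
exact: leq_trans (implyP (le12 j) ji) (implyP (le23 j) ji).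
Qed.

Lemma leL_prefix_le (k : nat) (u v : 'I_k -> nat) (i : 'I_k) :
  leL u v -> prefix_le u v i.
Proof. by move=> le_uv; apply/forallP=> j; apply/implyP. Qed.

Theorem lemma4 (k n : nat) (a u v : 'I_k -> nat) :
  inL n a -> inL n u -> inL n v ->
  leL u v -> leL (fa a u) (fa a v).
Proof.
move=> _ _ _ le_uv i; rewrite !fa_step_toward.
have le_uv_prefix := leL_prefix_le i le_uv.
apply: leq_trans (step_toward_monotone _ _ _ (le_uv i)) _.
apply: step_toward_permissions; apply/implyP => prefix_v.
- exact: prefix_le_trans le_uv_prefix prefix_v.
- exact: prefix_le_trans prefix_v le_uv_prefix.
Qed.
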